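(* Let $\widehat{G}$ be a signed complete bigraph. Then $\widehat{G}$ is chordal if and only if it does not contain any signed graph in $F_1\cup F_2\cup F_3\cup F_4$ as an induced subgraph, where: $F_1$ consists of the single signed graph $K_{2,2}$ (a 4-cycle) with all four edges negative; $F_2$: the complete bigraph with parts $\{a_1,a_2\}$, $\{b_1,b_2,b_3\}$, with $a_1b_1,a_1b_2,a_2b_2,a_2b_3$ negative and $a_1b_3,a_2b_1$ free; $F_3$: the complete bigraph with parts $\{a_1,a_2\}$, $\{b_1,b_2,b_3,b_4\}$, with $a_1b_1,a_1b_2,a_2b_3,a_2b_4$ negative and the other four edges free; $F_4$: the complete bigraph with parts $\{a_1,a_2,a_3\}$, $\{b_1,b_2,b_3\}$, with $a_1b_1,a_2b_2,a_3b_3$ negative and the other six edges free.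
   Context: A signed graph is a finite simple graph each of whose edges is assigned a sign, positive or negative. A signed bigraph is a signed graph whose underlying graph is bipartite, with bipartition $(X,Y)$; it is a signed complete bigraph if the underlying graph is complete bipartite. An induced subgraph is obtained by deleting vertices only (signs are inherited); $\widehat G$ contains $H$ as an induced subgraph if some induced subgraph of $\widehat G$ is isomorphic to $H$ via a sign-preserving isomorphism. A signed graph is positive if all its edges are positive. In a bigraph with bipartition $(X,Y)$, a subgraph $H$ is a biclique if every vertex of $V(H)\cap X$ is adjacent to every vertex of $V(H)\cap Y$. For an edge $uv$, $N(uv)=(N(u)\cup N(v))\setminus\{u,v\}$. An edge $uv$ of a signed bigraph is signed simplicial if $N(uv)$ induces a positive biclique. A signed bigraph $\widehat G$ is chordal if its edges can be ordered $e_1,\dots,e_m$ so that each $e_i$ is signed simplicial in the signed bigraph $\widehat G-\{e_1,\dots,e_{i-1}\}$ obtained by deleting these edges (but no vertices). A family described by a graph with some edges declared negative, some positive, and the rest declared free, is the set of all signed graphs obtained by giving each free edge an arbitrary sign. *)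

From mathcomp Require Import all_boot.
Set Implicit Arguments. Unset Strict Implicit. Unset Printing Implicit Defensive.

(* A signed bigraph on a finite vertex type T: bipartition (X, ~:X),
   edge set E : {set T * T} of ordered pairs (x, y) with x \in X, y \notin X,
   and sign function neg : T -> T -> bool, where edge (x,y) is negative iff
   neg x y (only the values on X x Y matter). *)

Section Signed.
Variable T : finType.

Definition sadj (E : {set T * T}) (u v : T) : bool := ((u, v) \in E) || ((v, u) \in E).

Definition nbhd_edge (E : {set T * T}) (u v : T) : {set T} :=
  [set w | (sadj E u w || sadj E v w) && (w != u) && (w != v)].

Definition signed_simplicial (X : {set T}) (neg : T -> T -> bool)
    (E : {set T * T}) (e : T * T) : bool :=
  [forall x, forall y,
     [&& x \in nbhd_edge E e.1 e.2, y \in nbhd_edge E e.1 e.2, x \in X & y \notin X]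
     ==> ((x, y) \in E) && ~~ neg x y].

Fixpoint simplicial_ordering (X : {set T}) (neg : T -> T -> bool)
    (E : {set T * T}) (s : seq (T * T)) : bool :=
  match s with
  | [::] => E == set0
  | e :: s' => [&& e \in E, signed_simplicial X neg E e
                & simplicial_ordering X neg (E :\ e) s']
  end.

Definition chordal (X : {set T}) (neg : T -> T -> bool) (E : {set T * T}) : Prop :=
  exists s, simplicial_ordering X neg E s.

Definition complete_edges (X : {set T}) : {set T * T} :=
  [set p : T * T | (p.1 \in X) && (p.2 \notin X)].

Definition cneg (X : {set T}) (neg : T -> T -> bool) (u v : T) : bool :=
  if u \in X then neg u v else neg v u.

End Signed.

(* Patterns: complete bigraph with parts 'I_p (the a_i) and 'I_q (the b_j),
   signed by sg : 'I_p -> 'I_q -> bool (true = negative). *)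
Definition pat_adj (p q : nat) (u v : 'I_p + 'I_q) : bool :=
  match u, v with
  | inl _, inr _ => true
  | inr _, inl _ => true
  | _, _ => false
  end.

Definition pat_neg (p q : nat) (sg : 'I_p -> 'I_q -> bool) (u v : 'I_p + 'I_q) : bool :=
  match u, v with
  | inl i, inr j => sg i j
  | inr j, inl i => sg i j
  | _, _ => false
  end.

Definition contains_pat (T : finType) (X : {set T}) (neg : T -> T -> bool)
    (p q : nat) (sg : 'I_p -> 'I_q -> bool) : Prop :=
  exists f : 'I_p + 'I_q -> T, injective f /\
    forall u v, pat_adj u v = sadj (complete_edges X) (f u) (f v) /\
                (pat_adj u v -> pat_neg sg u v = cneg X neg (f u) (f v)).

(* family given by prescribed negative edges (negs); all other edges free *)
Definition contains_family (T : finType) (X : {set T}) (neg : T -> T -> bool)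
    (p q : nat) (negs : 'I_p -> 'I_q -> bool) : Prop :=
  exists sg : 'I_p -> 'I_q -> bool,
    (forall i j, negs i j -> sg i j) /\ contains_pat X neg sg.

(* indices: a_(i+1) <-> i, b_(j+1) <-> j *)
Definition F1neg (i : 'I_2) (j : 'I_2) : bool := true.
Definition F2neg (i : 'I_2) (j : 'I_3) : bool :=
  ((i == 0 :> nat) && (j <= 1)) || ((i == 1 :> nat) && (1 <= j)).
Definition F3neg (i : 'I_2) (j : 'I_4) : bool :=
  ((i == 0 :> nat) && (j <= 1)) || ((i == 1 :> nat) && (2 <= j)).
Definition F4neg (i : 'I_3) (j : 'I_3) : bool := (i == j :> nat).

From mathcomp Require Import all_boot.
Set Implicit Arguments. Unset Strict Implicit. Unset Printing Implicit Defensive.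

(* The graph is chordal exactly when its negative edges are covered by one
   vertex x0 of X together with one vertex y0 of Y.

   If such a cover exists, delete the edges xy in lexicographic order of the
   ranks of x and y, where x0 and y0 are ranked first.  When xy is deleted, a
   remaining neighbour a of y in X ranks after x and a remaining neighbour b of
   x in Y ranks after y; hence ab is still present, and it is positive because
   a <> x0 and b <> y0.

   If no such cover exists, choose a negative edge a1b1, then a negative edge
   a2b2 escaping the cover (a1, b1), then a3b3 and a4b4 escaping (a1, b2) and
   (a2, b1); a case analysis on the coincidences among these vertices yields a
   member of F1, ..., F4.  Conversely every edge of each F_i misses some
   negative edge of F_i, so the first edge of an induced F_i deleted by an
   ordering is never signed simplicial. *)

Definition has_disjoint_negs p q (negs : 'I_p -> 'I_q -> bool) : Prop :=
  forall i j, exists k l, [/\ k != i, l != j & negs k l].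

Lemma pat_adj_disjoint_neg p q (sg : 'I_p -> 'I_q -> bool) u v :
  has_disjoint_negs sg -> pat_adj u v ->
  exists u' v', [/\ u' != u, v' != v, pat_adj u' v, pat_adj u v' & pat_neg sg u' v'].
Proof.
move=> disj; case: u => [i|j]; case: v => [i'|j'] //= _.
- by have [k [l [ki lj nkl]]] := disj i j'; exists (inl k), (inr l).
- by have [k [l [ki lj nkl]]] := disj i' j; exists (inr l), (inl k).
Qed.

Ltac exists_ord :=
  lazymatch goal with |- exists _ : 'I_?n, _ =>
    exists (@Ordinal n 0 isT) + exists (@Ordinal n 1 isT)
    + exists (@Ordinal n 2 isT) + exists (@Ordinal n 3 isT)
  end.

(* Goals are solved one at a time: a single tactic over all of them would
   backtrack jointly through the witnesses of every goal. *)
Ltac disjoint_negs :=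
  case=> -[|[|[|i]]] //= Hi; case=> -[|[|[|[|j]]]] //= Hj;
  repeat (only 1: once (exists_ord; exists_ord; by split)).

Lemma F1_disjoint_negs : has_disjoint_negs F1neg. Proof. disjoint_negs. Qed.
Lemma F2_disjoint_negs : has_disjoint_negs F2neg. Proof. disjoint_negs. Qed.
Lemma F3_disjoint_negs : has_disjoint_negs F3neg. Proof. disjoint_negs. Qed.
Lemma F4_disjoint_negs : has_disjoint_negs F4neg. Proof. disjoint_negs. Qed.

Section SignedCompleteBigraph.
Variables (T : finType) (X : {set T}) (neg : T -> T -> bool).

Lemma sadj_complete a b : sadj (complete_edges X) a b = ((a \in X) != (b \in X)).
Proof. by rewrite /sadj !inE /=; case: (a \in X); case: (b \in X). Qed.

Lemma not_signed_simplicial (E : {set T * T}) u v x y :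
  u \in X -> v \notin X -> x \in X -> y \notin X -> x != u -> y != v ->
  (x, v) \in E -> (u, y) \in E -> neg x y -> ~~ signed_simplicial X neg E (u, v).
Proof.
move=> Xu Yv Xx Yy xu yv xvE uyE nxy.
apply/negP => /forallP /(_ x) /forallP /(_ y) /implyP.
have xv : x != v by apply: contraNneq Yv => <-.
have yu : y != u by apply: contraNneq Yy => ->.
rewrite !inE /sadj /= xvE uyE xu xv yu yv Xx Yy !orbT /= => /(_ isT).
by rewrite nxy andbF.
Qed.

Section EmbeddedPattern.
Variables (p q : nat) (sg : 'I_p -> 'I_q -> bool) (f : 'I_p + 'I_q -> T).
Hypothesis f_inj : injective f.
Hypothesis f_adj : forall u v, pat_adj u v = ((f u \in X) != (f v \in X)).
Hypothesis f_neg : forall u v, pat_adj u v -> pat_neg sg u v = cneg X neg (f u) (f v).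
Hypothesis sg_disjoint : has_disjoint_negs sg.

Definition covers_pattern (E : {set T * T}) : Prop :=
  forall u v, f u \in X -> f v \notin X -> (f u, f v) \in E.

Lemma pattern_edge_not_simplicial E u v :
  covers_pattern E -> f u \in X -> f v \notin X -> ~~ signed_simplicial X neg E (f u, f v).
Proof.
move=> coverE Xu Yv.
have uv : pat_adj u v by rewrite f_adj Xu (negbTE Yv).
have [u' [v' [u'u v'v u'v uv' nu'v']]] := pat_adj_disjoint_neg sg_disjoint uv.
have Xu' : f u' \in X by move: u'v; rewrite f_adj (negbTE Yv); case: (_ \in X).
have Yv' : f v' \notin X by move: uv'; rewrite f_adj Xu; case: (_ \in X).
apply: (not_signed_simplicial (x := f u') (y := f v')); rewrite ?(inj_eq f_inj) ?coverE //.
have u'v' : pat_adj u' v' by rewrite f_adj Xu' (negbTE Yv').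
by have := f_neg u'v'; rewrite /cneg Xu' nu'v' => <-.
Qed.

Lemma no_simplicial_ordering_covering (i0 : 'I_p) (j0 : 'I_q) E s :
  covers_pattern E -> ~~ simplicial_ordering X neg E s.
Proof.
elim: s E => [|e s IH] E coverE /=.
  have [u [v [Xu Yv]]] : exists u v, f u \in X /\ f v \notin X.
    have : (f (inl i0) \in X) != (f (inr j0) \in X) by rewrite -f_adj.
    case Xu: (f (inl i0) \in X); case Xv: (f (inr j0) \in X) => // _.
      by exists (inl i0), (inr j0); rewrite Xu Xv.
    by exists (inr j0), (inl i0); rewrite Xu Xv.
  by apply/negP => /eqP E0; have := coverE u v Xu Yv; rewrite E0 inE.
case: (boolP [exists u, exists v, [&& e == (f u, f v), f u \in X & f v \notin X]]).
  case/existsP => u /existsP [v /and3P [/eqP -> Xu Yv]].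
  by rewrite (negbTE (pattern_edge_not_simplicial coverE Xu Yv)) andbF.
move=> not_image; apply/negP => /and3P [_ _]; apply/negP/IH => u v Xu Yv.
rewrite !inE coverE // andbT; apply: contra not_image => /eqP <-.
by apply/existsP; exists u; apply/existsP; exists v; rewrite eqxx Xu Yv.
Qed.

End EmbeddedPattern.

Lemma not_chordal_of_family p q (negs : 'I_p -> 'I_q -> bool) (i0 : 'I_p) (j0 : 'I_q) :
  has_disjoint_negs negs -> contains_family X neg negs -> ~ chordal X neg (complete_edges X).
Proof.
move=> disj [sg [negs_sg [f [f_inj f_pat]]]] [s].
have f_adj u v : pat_adj u v = ((f u \in X) != (f v \in X)).
  by case: (f_pat u v) => -> _; rewrite sadj_complete.
have f_neg u v : pat_adj u v -> pat_neg sg u v = cneg X neg (f u) (f v).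
  by case: (f_pat u v).
have sg_disjoint : has_disjoint_negs sg.
  by move=> i j; have [k [l [ki lj /negs_sg nkl]]] := disj i j; exists k, l.
apply/negP/(no_simplicial_ordering_covering f_inj f_adj f_neg sg_disjoint i0 j0).
by move=> u v Xu Yv; rewrite inE /= Xu.
Qed.

Lemma chordal_of_key (E : {set T * T}) (key : T * T -> nat) :
  {in E &, injective key} ->
  (forall e, e \in E -> signed_simplicial X neg [set e' in E | key e <= key e'] e) ->
  chordal X neg E.
Proof.
have [n szE] : {n | #|E| <= n} by exists #|E|.
elim: n E szE => [|n IH] E szE kinj simpE.
  by exists [::]; apply/eqP/cards0_eq/eqP; rewrite -leqn0.
have [->|[e0 e0E]] := set_0Vmem E; first by exists [::]; rewrite /= eqxx.
case: (arg_minnP key e0E) => e eE emin; have {}eE : e \in E by [].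
have upper_setD1 e' : e' \in E :\ e ->
    [set e'' in E :\ e | key e' <= key e''] = [set e'' in E | key e' <= key e''].
  rewrite !inE => /andP [e'e e'E]; apply/setP => e''; rewrite !inE.
  case le: (key e' <= key e''); rewrite ?andbF // !andbT andb_idl // => _.
  apply: contraTneq le => ->.
  by rewrite -ltnNge ltn_neqAle (emin _ e'E) andbT (inj_in_eq kinj) // eq_sym.
have [|||s hs] := IH (E :\ e).
- by move: szE; rewrite (cardsD1 e E) eE.
- by move=> a b /setD1P [_ aE] /setD1P [_ bE]; apply: kinj.
- by move=> e' e'E; rewrite upper_setD1 //; apply: simpE; case/setD1P: e'E.
exists (e :: s); rewrite /= eE hs andbT.
have -> : E = [set e' in E | key e <= key e'].
  by apply/setP => e'; rewrite inE andb_idr // => /emin.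
exact: simpE.
Qed.

Definition neg_cover (x0 y0 : T) : bool :=
  [forall a, forall b, [&& a \in X, b \notin X & neg a b] ==> (a == x0) || (b == y0)].

Lemma neg_coverPn x0 y0 :
  reflect (exists a b, [/\ a \in X, b \notin X, neg a b, a != x0 & b != y0])
          (~~ neg_cover x0 y0).
Proof.
rewrite negb_forall; apply: (iffP existsP) => [[a] | [a [b [Xa Yb nab ax by0]]]].
  rewrite negb_forall => /existsP [b]; rewrite negb_imply negb_or.
  by case/andP => /and3P [Xa Yb nab] /andP [ax by0]; exists a, b.
exists a; rewrite negb_forall; apply/existsP; exists b.
by rewrite Xa Yb nab (negbTE ax) (negbTE by0).
Qed.

Definition first_rank (t0 a : T) : nat := if a == t0 then 0 else (enum_rank a).+1.

Definition lex_key (x0 y0 : T) (e : T * T) : nat :=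
  first_rank x0 e.1 * #|T|.+1 + first_rank y0 e.2.

Lemma first_rank_lt t0 a : first_rank t0 a < #|T|.+1.
Proof. by rewrite /first_rank; case: (a == t0); rewrite /= ?ltnS ?ltn_ord. Qed.

Lemma first_rank_inj t0 : injective (first_rank t0).
Proof.
move=> a b; rewrite /first_rank; case: eqP => [->|_]; case: eqP => [->|_] //.
by case=> /val_inj /enum_rank_inj.
Qed.

Lemma first_rank_eq0 t0 a : (first_rank t0 a == 0) = (a == t0).
Proof. by rewrite /first_rank; case: (a == t0). Qed.

Lemma lex_key_inj x0 y0 : injective (lex_key x0 y0).
Proof.
move=> [a b] [a' b'] /(congr1 (fun k => (k %/ #|T|.+1, k %% #|T|.+1))).
rewrite /lex_key /= !divnMDl // !modnMDl !divn_small ?modn_small ?first_rank_lt //.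
by rewrite !addn0 => -[/first_rank_inj -> /first_rank_inj ->].
Qed.

Lemma lex_key_leq_fst x0 y0 a a' b :
  (lex_key x0 y0 (a, b) <= lex_key x0 y0 (a', b)) = (first_rank x0 a <= first_rank x0 a').
Proof. by rewrite /lex_key leq_add2r leq_pmul2r. Qed.

Lemma lex_key_leq_snd x0 y0 a b b' :
  (lex_key x0 y0 (a, b) <= lex_key x0 y0 (a, b')) = (first_rank y0 b <= first_rank y0 b').
Proof. by rewrite /lex_key leq_add2l. Qed.

Lemma chordal_of_neg_cover x0 y0 : neg_cover x0 y0 -> chordal X neg (complete_edges X).
Proof.
move=> /forallP cover; apply: (@chordal_of_key _ (lex_key x0 y0)).
  by move=> e e' _ _; apply: lex_key_inj.
move=> [x y]; rewrite inE /= => /andP [Xx Yy].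
apply/forallP => a; apply/forallP => b; apply/implyP => /and4P [Na Nb Xa Yb].
move: Na Nb; rewrite !inE /sadj !inE /= Xx (negbTE Yy) Xa (negbTE Yb) /= ?andbF ?orbF.
rewrite lex_key_leq_fst lex_key_leq_snd => /andP [/andP [le_xa ax] _] /andP [/andP [le_yb _] b_y].
have lt_a : first_rank x0 x < first_rank x0 a.
  by rewrite ltn_neqAle le_xa andbT (inj_eq (@first_rank_inj x0)) eq_sym.
have lt_b : first_rank y0 y < first_rank y0 b.
  by rewrite ltn_neqAle le_yb andbT (inj_eq (@first_rank_inj y0)) eq_sym.
rewrite /lex_key leq_add ?leq_mul //=.
apply/negP => nab; have := forallP (cover a) b; rewrite Xa Yb nab /=.
by rewrite -!first_rank_eq0 !eqn0Ngt (leq_trans _ lt_a) ?(leq_trans _ lt_b).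
Qed.

Lemma contains_family_of_embedding p q (negs : 'I_p -> 'I_q -> bool)
    (fa : 'I_p -> T) (fb : 'I_q -> T) :
  injective fa -> injective fb -> (forall i, fa i \in X) -> (forall j, fb j \notin X) ->
  (forall i j, negs i j -> neg (fa i) (fb j)) -> contains_family X neg negs.
Proof.
move=> inj_a inj_b Xa Yb negs_ab.
exists (fun i j => neg (fa i) (fb j)); split => //.
exists (fun u => match u with inl i => fa i | inr j => fb j end); split.
- case=> [i|j] [i'|j'] /= e.
  + by rewrite (inj_a _ _ e).
  + by move: (Xa i) (Yb j'); rewrite e => ->.
  + by move: (Xa i') (Yb j); rewrite e => ->.
  + by rewrite (inj_b _ _ e).
- by case=> [i|j] [i'|j']; rewrite /sadj /cneg !inE /= ?Xa ?(negbTE (Yb _)).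
Qed.

Lemma contains_family_of_seqs p q (negs : 'I_p -> 'I_q -> bool) (d : T) (sa sb : seq T) :
  uniq sa -> size sa = p -> uniq sb -> size sb = q ->
  all (fun v => v \in X) sa -> all (fun v => v \notin X) sb ->
  (forall (i : 'I_p) (j : 'I_q), negs i j -> neg (nth d sa i) (nth d sb j)) ->
  contains_family X neg negs.
Proof.
move=> uniq_a size_a uniq_b size_b Xa Yb negs_ab.
apply: (contains_family_of_embedding (fa := fun i => nth d sa i) (fb := fun j => nth d sb j)).
- by move=> i j /eqP; rewrite nth_uniq ?size_a // => /eqP /val_inj.
- by move=> i j /eqP; rewrite nth_uniq ?size_b // => /eqP /val_inj.
- by move=> i; apply: (allP Xa); rewrite mem_nth ?size_a.
- by move=> j; apply: (allP Yb); rewrite mem_nth ?size_b.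
- exact: negs_ab.
Qed.

End SignedCompleteBigraph.

Lemma contains_family_compl (T : finType) (X : {set T}) (neg : T -> T -> bool) p q
    (negs : 'I_p -> 'I_q -> bool) :
  contains_family (~: X) (fun u v => neg v u) negs -> contains_family X neg negs.
Proof.
case=> sg [negs_sg [f [f_inj f_pat]]]; exists sg; split=> //; exists f; split=> // u v.
have sadjE a b : sadj (complete_edges (~: X)) a b = sadj (complete_edges X) a b.
  by rewrite !sadj_complete !inE; case: (a \in X); case: (b \in X).
have cnegE a b : cneg (~: X) (fun u v => neg v u) a b = cneg X neg a b.
  by rewrite /cneg inE; case: (a \in X).
by rewrite -sadjE -cnegE.
Qed.

Definition has_forbidden_family (T : finType) (X : {set T}) (neg : T -> T -> bool) : Prop :=
  [\/ contains_family X neg F1neg, contains_family X neg F2neg,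
      contains_family X neg F3neg | contains_family X neg F4neg].

Ltac uniq_seq := rewrite /= !inE ?negb_or /= ?andbT;
  repeat (apply/andP; split); by [|rewrite eq_sym].
Ltac on_sides := rewrite /= ?inE ?negbK ?andbT; repeat (apply/andP; split); assumption.
Ltac negs_on_seqs := case=> -[|[|[|[|i]]]] //= Hi; case=> -[|[|[|[|j]]]] //= Hj;
  rewrite /F1neg /F2neg /F3neg /F4neg /=; by [|move=> _].
Ltac family_on d sa sb :=
  apply: (contains_family_of_seqs (d := d) (sa := sa) (sb := sb));
  [uniq_seq | by [] | uniq_seq | by [] | on_sides | on_sides | negs_on_seqs].

Lemma forbidden_of_no_neg_cover (T : finType) (X : {set T}) (neg : T -> T -> bool) (t : T) :
  (forall x0 y0, ~~ neg_cover X neg x0 y0) -> has_forbidden_family X neg.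
Proof.
move=> no_cover.
have /neg_coverPn [a1 [b1 [Xa1 Yb1 n11 _ _]]] := no_cover t t.
have /neg_coverPn [a2 [b2 [Xa2 Yb2 n22 a21 b21]]] := no_cover a1 b1.
have /neg_coverPn [a3 [b3 [Xa3 Yb3 n33 a31 b32]]] := no_cover a1 b2.
have /neg_coverPn [a4 [b4 [Xa4 Yb4 n44 a42 b41]]] := no_cover a2 b1.
have F4_of_a3 : a3 != a2 -> b3 != b1 -> contains_family X neg F4neg.
  by move=> a32 b31; family_on a1 [:: a1; a2; a3] [:: b1; b2; b3].
have F4_of_a4 : a4 != a1 -> b4 != b2 -> contains_family X neg F4neg.
  by move=> a41 b42; family_on a1 [:: a1; a2; a4] [:: b1; b2; b4].
(* Nine cases remain: a3 = a2 or b3 = b1, and a4 = a1 or b4 = b2. *)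
case: (eqVneq a3 a2) => [? | a32]; case: (eqVneq b3 b1) => [? | b31];
  try (by apply: Or44; apply: F4_of_a3); subst;
  case: (eqVneq a4 a1) => [? | a41]; case: (eqVneq b4 b2) => [? | b42];
  try (by apply: Or44; apply: F4_of_a4); subst.
- by apply: Or41; family_on a1 [:: a1; a2] [:: b1; b2].
- by apply: Or42; family_on a1 [:: a1; a2] [:: b4; b1; b2].
- by apply: Or42; apply: contains_family_compl; family_on a1 [:: b2; b1] [:: a4; a2; a1].
- by apply: Or42; family_on a1 [:: a2; a1] [:: b3; b2; b1].
- case: (eqVneq b4 b3) => [? | b43]; first subst.
    by apply: Or42; family_on a1 [:: a1; a2] [:: b1; b3; b2].
  by apply: Or43; family_on a1 [:: a1; a2] [:: b1; b4; b2; b3].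
- by apply: Or44; family_on a1 [:: a1; a2; a4] [:: b1; b3; b2].
- by apply: Or42; apply: contains_family_compl; family_on a1 [:: b1; b2] [:: a3; a1; a2].
- by apply: Or44; family_on a1 [:: a3; a1; a2] [:: b1; b4; b2].
- case: (eqVneq a4 a3) => [? | a43]; first subst.
    by apply: Or42; apply: contains_family_compl; family_on a1 [:: b1; b2] [:: a1; a3; a2].
  by apply: Or43; apply: contains_family_compl; family_on a1 [:: b1; b2] [:: a1; a3; a2; a4].
Qed.

Theorem theorem2p2 (T : finType) (X : {set T}) (neg : T -> T -> bool) :
  chordal X neg (complete_edges X) <->
  ~ [\/ contains_family X neg F1neg, contains_family X neg F2neg,
        contains_family X neg F3neg | contains_family X neg F4neg].
Proof.
split.
- move=> chordalG [F|F|F|F].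
  + exact: (not_chordal_of_family ord0 ord0 F1_disjoint_negs F chordalG).
  + exact: (not_chordal_of_family ord0 ord0 F2_disjoint_negs F chordalG).
  + exact: (not_chordal_of_family ord0 ord0 F3_disjoint_negs F chordalG).
  + exact: (not_chordal_of_family ord0 ord0 F4_disjoint_negs F chordalG).
- move=> no_forbidden; have [t _ | T0] := pickP (@predT T); last first.
    by exists [::]; apply/eqP/setP => -[a b]; have := T0 a.
  have [/existsP [x0 /existsP [y0 cover]] | no_cover] :=
    boolP [exists x0, exists y0, neg_cover X neg x0 y0].
    exact: chordal_of_neg_cover cover.
  case: no_forbidden; apply: (forbidden_of_no_neg_cover t) => x0 y0.
  by apply: contra no_cover => cover; apply/existsP; exists x0; apply/existsP; exists y0.
Qed.
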